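(* Let $A$ be a general metric space, $N$ a right module on $A$ and $\mathcal F$ a filter on $A$. Then $\inf_{x\in A}\big(M^-(\mathcal F)(x)+N(x)\big)\ \ge\ \lim^-_{\mathcal F}N$. If moreover $\mathcal F$ is weakly flat, this inequality is an equality.
   Context: $[0,\infty]$ with $+$ ($x+\infty=\infty$), $\inf\emptyset=\infty$, $\sup\emptyset=0$. A general metric space $A$ is a set with $A(-,-):A\times A\to[0,\infty]$, $A(x,x)=0$, $A(x,z)\le A(x,y)+A(y,z)$ (no symmetry). A right module on $A$ is $N:A\to[0,\infty]$ with $N(y)\le A(x,y)+N(x)$ for all $x,y$. A filter on $A$ is a nonempty set of nonempty subsets closed under finite intersections and supersets. For $t:A\to[0,\infty]$, $\lim^+_{\mathcal F}t=\inf_{f\in\mathcal F}\sup_{x\in f}t(x)$ and $\lim^-_{\mathcal F}t=\sup_{f\in\mathcal F}\inf_{x\in f}t(x)$. $M^-(\mathcal F)(x)=\lim^-_{y\in\mathcal F}A(x,y)$. $\mathcal F$ is weakly flat iff $\lim^+_{\mathcal F}M^-(\mathcal F)=0$. *)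

(* [0,oo] is modelled as the nonnegative part of \bar R
   for an arbitrary R : realType. *)
From HB Require Import structures.
From mathcomp Require Import all_boot all_order all_algebra.
From mathcomp Require Import all_classical all_reals ereal.
Set Implicit Arguments. Unset Strict Implicit. Unset Printing Implicit Defensive.
Import Order.TTheory GRing.Theory Num.Theory.
Local Open Scope classical_set_scope.
Local Open Scope ereal_scope.

Definition gen_metric {R : realType} {A : Type} (d : A -> A -> \bar R) : Prop :=
  [/\ forall x y, 0 <= d x y,
      forall x, d x x = 0 &
      forall x y z, d x z <= d x y + d y z].

Definition right_module {R : realType} {A : Type} (d : A -> A -> \bar R)
  (N : A -> \bar R) : Prop :=
  (forall x, 0 <= N x) /\ (forall x y, N y <= d x y + N x).

Definition is_filter {A : Type} (F : set (set A)) : Prop :=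
  [/\ exists f, F f,
      forall f, F f -> f !=set0,
      forall f g, F f -> F g -> F (f `&` g) &
      forall f g, F f -> f `<=` g -> F g].

Definition lim_plus {R : realType} {A : Type} (F : set (set A)) (t : A -> \bar R)
  : \bar R := ereal_inf [set ereal_sup (t @` f) | f in F].

Definition lim_minus {R : realType} {A : Type} (F : set (set A)) (t : A -> \bar R)
  : \bar R := ereal_sup [set ereal_inf (t @` f) | f in F].

Definition Mminus {R : realType} {A : Type} (d : A -> A -> \bar R)
  (F : set (set A)) (x : A) : \bar R := lim_minus F (fun y => d x y).

Definition weakly_flat {R : realType} {A : Type} (d : A -> A -> \bar R)
  (F : set (set A)) : Prop := lim_plus F (Mminus d F) = 0.

From HB Require Import structures.
From mathcomp Require Import all_boot all_order all_algebra.
From mathcomp Require Import all_classical all_reals ereal.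
Import Order.TTheory GRing.Theory Num.Theory.
Local Open Scope classical_set_scope.
Local Open Scope ereal_scope.

(* For a set f of the filter and any x, the module inequality gives
   inf_f N <= inf_{y in f} d x y + N x <= M^-(x) + N x; taking the sup over f
   yields the inequality.  Conversely, if sup_g M^- < e on some g in the
   filter, every y in g satisfies inf_x (M^-(x) + N x) <= M^-(y) + N y
   <= N y + e, so the infimum is at most inf_g N + e <= lim^- N + e. *)

Lemma le_ereal_inf_imageD {R : realType} {T : Type} (S : set T)
    (u : T -> \bar R) (a : \bar R) (c : R) :
  (forall y, S y -> a <= u y + c%:E) -> a <= ereal_inf (u @` S) + c%:E.
Proof.
move=> le_au; rewrite -leeBlDr //; apply: le_ereal_inf_tmp => _ [y Sy <-].
by rewrite leeBlDr // le_au.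
Qed.

Lemma ereal_inf_image_le_lim_minus {R : realType} {A : Type}
    (F : set (set A)) (t : A -> \bar R) {f : set A} :
  F f -> ereal_inf (t @` f) <= lim_minus F t.
Proof. by move=> Ff; apply: ereal_sup_ubound; exists f. Qed.

Section RightModule.
Context {R : realType} {A : Type} (d : A -> A -> \bar R) (N : A -> \bar R)
  (F : set (set A)).
Hypothesis d_ge0 : forall x y, 0 <= d x y.
Hypothesis N_ge0 : forall x, 0 <= N x.
Hypothesis N_module : forall x y, N y <= d x y + N x.

Lemma ereal_inf_image_le_Mminus_add (f : set A) (x : A) :
  F f -> ereal_inf (N @` f) <= Mminus d F x + N x.
Proof.
move=> Ff.
have inf_le_M := ereal_inf_image_le_lim_minus F (fun y => d x y) Ff.
have M_ge0 : 0 <= Mminus d F x.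
  by apply: le_trans inf_le_M; apply: le_ereal_inf_tmp => _ [y _ <-].
case Nx: (N x) => [r| |].
- apply: le_trans (leeD2r _ inf_le_M); apply: le_ereal_inf_imageD => y fy.
  rewrite -Nx; apply: le_trans (N_module x y).
  by apply: ereal_inf_lbound; exists y.
- by rewrite addey ?leey // gt_eqF // (lt_le_trans _ M_ge0) ?ltNy0.
- by have := N_ge0 x; rewrite Nx.
Qed.

Lemma lim_minus_le_Mminus_add :
  lim_minus F N <= ereal_inf [set Mminus d F x + N x | x in [set: A]].
Proof.
apply: ge_ereal_sup => _ [f Ff <-]; apply: le_ereal_inf_tmp => _ [x _ <-].
exact: ereal_inf_image_le_Mminus_add.
Qed.

End RightModule.

Lemma ereal_inf_Mminus_add_le {R : realType} {A : Type}
    (d : A -> A -> \bar R) (N : A -> \bar R) (F : set (set A)) (e : R) :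
  lim_plus F (Mminus d F) < e%:E ->
  ereal_inf [set Mminus d F x + N x | x in [set: A]] <= lim_minus F N + e%:E.
Proof.
move=> /ereal_inf_lt [_ [g Fg <-] sup_lt_e].
apply: le_trans (leeD2r _ (ereal_inf_image_le_lim_minus F N Fg)).
apply: le_ereal_inf_imageD => y gy.
apply: (@le_trans _ _ (Mminus d F y + N y)).
  by apply: ereal_inf_lbound; exists y.
rewrite addeC leeD2l //; apply: le_trans (ltW sup_lt_e).
by apply: ereal_sup_ubound; exists y.
Qed.

Theorem mainTheorem9 (R : realType) (A : Type) (d : A -> A -> \bar R)
  (N : A -> \bar R) (F : set (set A)) :
  gen_metric d -> right_module d N -> is_filter F ->
  lim_minus F N <= ereal_inf [set Mminus d F x + N x | x in [set: A]] /\
  (weakly_flat d F ->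
   ereal_inf [set Mminus d F x + N x | x in [set: A]] = lim_minus F N).
Proof.
move=> [d_ge0 _ _] [N_ge0 N_module] _.
have lim_le_inf := lim_minus_le_Mminus_add d N F d_ge0 N_ge0 N_module.
split=> // flat; apply/le_anti; rewrite lim_le_inf andbT.
apply/lee_addgt0Pr => e e_gt0; apply: ereal_inf_Mminus_add_le.
by rewrite flat lte_fin.
Qed.
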